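(* Let $\alpha\ge1$, $\rho\in[0,1]$ and $U\ge1$ be reals, and let $r:\mathbb R\to[0,\infty)$ be a nondecreasing, locally integrable function with $r(x)=0$ for $x<0$. For real $y$ let $\beta^{(y)}:=\frac{\alpha}{e^{\alpha}-1}\int_{y-1}^{y}r(x)e^{\alpha(y-x)}\,dx$, and define $$\mathrm{PRD}_a:=\int_{U-\rho}^{U}r(x)\,dx+\frac1\alpha\int_0^{U-\rho}r(x)\,dx-\frac1\alpha\int_0^{U-\rho}\beta^{(x)}\,dx+(1-\rho)\beta^{(U)}.$$ Then $$\mathrm{PRD}_a\le\int_{U-1}^{U-\rho}r(x)\phi_x\,dx+\int_{U-\rho}^{U}r(x)\psi_x\,dx+r(U-1)\,\Omega,$$ where $$\phi_x:=(1-\rho)\frac{\alpha}{e^{\alpha}-1}e^{\alpha(U-x)}+\frac1\alpha\cdot\frac{e^{\alpha}-e^{\alpha(U-\rho-x)}}{e^{\alpha}-1},\qquad \psi_x:=1+(1-\rho)\frac{\alpha}{e^{\alpha}-1}e^{\alpha(U-x)},$$ $$\Omega:=\frac1\alpha\cdot\frac{1}{e^{\alpha}-1}\left(\rho e^{\alpha}-\frac1\alpha\left(e^{\alpha}-e^{\alpha(1-\rho)}\right)\right).$$ *)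

From Stdlib Require Import Reals.
From Coquelicot Require Import Coquelicot.
Open Scope R_scope.

Definition beta_y (alpha : R) (r : R -> R) (y : R) : R :=
  alpha / (exp alpha - 1) * RInt (fun x => r x * exp (alpha * (y - x))) (y - 1) y.

Definition PRD_a (alpha rho U : R) (r : R -> R) : R :=
  RInt r (U - rho) U
  + / alpha * RInt r 0 (U - rho)
  - / alpha * RInt (fun x => beta_y alpha r x) 0 (U - rho)
  + (1 - rho) * beta_y alpha r U.

Definition phi_x (alpha rho U x : R) : R :=
  (1 - rho) * (alpha / (exp alpha - 1)) * exp (alpha * (U - x))
  + / alpha * ((exp alpha - exp (alpha * (U - rho - x))) / (exp alpha - 1)).

Definition psi_x (alpha rho U x : R) : R :=
  1 + (1 - rho) * (alpha / (exp alpha - 1)) * exp (alpha * (U - x)).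

Definition Omega (alpha rho : R) : R :=
  / alpha * (/ (exp alpha - 1)) *
  (rho * exp alpha - / alpha * (exp alpha - exp (alpha * (1 - rho)))).

(* Let G be a primitive of r(x) e^(-alpha x).  Then
   beta^(y) = alpha / (e^alpha - 1) * e^(alpha y) (G(y) - G(y - 1)), and integrating
   e^(alpha x) G(x) and e^(alpha x) G(x - 1) by parts turns every term of both sides into
   values of G and of a primitive of r.  The gap between the two sides is then a positive
   multiple of  int r(U - 1) w - int r w  over [U - 1 - rho, U - 1], with the weight
   w(x) = e^alpha - e^(alpha (U - rho - x)); w is nonnegative there and r is nondecreasing.
   Integration by parts against the merely integrable r needs integrability of r times a
   continuous function, obtained by uniform approximation with step functions. *)

From Stdlib Require Import Reals Lra Lia.
From Coquelicot Require Import Coquelicot.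
Open Scope R_scope.

(* Coquelicot often leaves equalities typed in the carrier of a normed module, which
   [ring], [field] and [lra] do not recognise as [R]. *)
Ltac R_eq := match goal with |- ?u = ?v => change (@eq R u v) end.

Lemma ex_RInt_sub (f : R -> R) (a b c d : R) :
  a <= c -> c <= d -> d <= b -> ex_RInt f a b -> ex_RInt f c d.
Proof.
  intros Hac Hcd Hdb Hf.
  apply (ex_RInt_Chasles_2 f a c d); [lra|].
  apply (ex_RInt_Chasles_1 f a d b); [lra | exact Hf].
Qed.

Lemma Int_part_nonneg (q : R) : 0 <= q -> 0 <= IZR (Int_part q).
Proof.
  intros Hq. destruct (base_Int_part q) as [_ Hlow].
  assert (Hz : (-1 < Int_part q)%Z) by (apply lt_IZR; lra).
  apply IZR_le. lia.
Qed.

Definition grid_floor (a h y : R) : R := a + h * IZR (Int_part ((y - a) / h)).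

Lemma grid_floor_bounds (a h y : R) :
  0 < h -> a <= y -> a <= grid_floor a h y <= y /\ y - h < grid_floor a h y.
Proof.
  intros Hh Hy. unfold grid_floor.
  set (q := (y - a) / h).
  assert (Hq : 0 <= q) by (unfold q; apply Rdiv_le_0_compat; lra).
  assert (Eq : h * q = y - a) by (unfold q; field; lra).
  pose proof (Int_part_nonneg q Hq) as H0.
  destruct (base_Int_part q) as [H1 H2].
  generalize dependent (IZR (Int_part q)); intros z H0 H1 H2.
  repeat split; nra.
Qed.

Lemma grid_floor_cell (a h y : R) (k : nat) :
  0 < h -> a + INR k * h < y < a + (INR k + 1) * h -> grid_floor a h y = a + h * INR k.
Proof.
  intros Hh Hy. unfold grid_floor.
  replace (Int_part ((y - a) / h)) with (Z.of_nat k); [now rewrite <- INR_IZR_INZ|].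
  apply Int_part_spec. rewrite <- INR_IZR_INZ.
  assert (Eq : (y - a) / h * h = y - a) by (field; lra).
  generalize dependent ((y - a) / h); intros q Eq. split; nra.
Qed.

Section ProductIntegrable.
Variables (f g : R -> R) (a b : R).
Hypothesis a_lt_b : a < b.
Hypothesis f_int : ex_RInt f a b.
Hypothesis g_cont : forall x, a <= x <= b -> continuous g x.

Let clamp (x : R) : R := Rmax a (Rmin b x).
Let mesh (n : nat) : R := (b - a) / INR (S n).
(* Outside [a, b] both factors are frozen at an endpoint, so that the
   approximation below is uniform on all of [R], as [filterlim_RInt] needs. *)
Let approx (n : nat) (x : R) : R := f (clamp x) * g (grid_floor a (mesh n) (clamp x)).

Let clamp_bounds x : a <= clamp x <= b.
Proof. unfold clamp, Rmax, Rmin. destruct (Rle_dec b x); destruct (Rle_dec a _); lra. Qed.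

Let clamp_id x : a <= x <= b -> clamp x = x.
Proof. intros H. unfold clamp, Rmax, Rmin. destruct (Rle_dec b x); destruct (Rle_dec a _); lra. Qed.

Let mesh_pos n : 0 < mesh n.
Proof. apply Rdiv_lt_0_compat; [lra | apply lt_0_INR; lia]. Qed.

Let mesh_total n : a + INR (S n) * mesh n = b.
Proof. unfold mesh. field. apply not_0_INR; lia. Qed.

Let approx_ex_RInt n : ex_RInt (approx n) a b.
Proof.
  pose proof (mesh_pos n) as Hh.
  assert (Hk : forall k, (k <= S n)%nat -> ex_RInt (approx n) a (a + INR k * mesh n)).
  { induction k as [|k IH]; intros Hk.
    { rewrite Rmult_0_l, Rplus_0_r. apply ex_RInt_point. }
    assert (Hkn : INR (S k) <= INR (S n)) by (apply le_INR; lia).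
    pose proof (mesh_total n) as Hb. rewrite S_INR in Hkn |- *.
    assert (H0 : 0 <= INR k * mesh n) by (apply Rmult_le_pos; [apply pos_INR | lra]).
    assert (Hkb : (INR k + 1) * mesh n <= INR (S n) * mesh n)
      by (apply Rmult_le_compat_r; lra).
    apply ex_RInt_Chasles with (a + INR k * mesh n); [apply IH; lia|].
    apply ex_RInt_ext with (fun x => scal (g (a + mesh n * INR k)) (f x)).
    - intros x Hx. rewrite Rmin_left, Rmax_right in Hx by lra.
      unfold approx. rewrite clamp_id by lra.
      rewrite (grid_floor_cell a (mesh n) x k) by lra. exact (Rmult_comm _ _).
    - apply (ex_RInt_scal f). apply (ex_RInt_sub f a b); [lra | lra | lra | exact f_int]. }
  rewrite <- (mesh_total n). apply Hk. lia.
Qed.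

Let approx_cvg :
  filterlim approx eventually
    (locally ((fun x => f (clamp x) * g (clamp x)) : fct_UniformSpace R R_UniformSpace)).
Proof.
  apply filterlim_locally. intros eps.
  destruct (ex_RInt_ub f a b f_int) as [M0 HM0].
  rewrite Rmin_left, Rmax_right in HM0 by lra.
  set (M := Rabs M0 + 1).
  assert (HM : 0 < M) by (unfold M; pose proof (Rabs_pos M0); lra).
  assert (Hf : forall y, a <= y <= b -> Rabs (f y) <= M).
  { intros y Hy. pose proof (HM0 y Hy) as H. pose proof (Rle_abs M0).
    change (Rabs (f y) <= M0) in H. unfold M. lra. }
  assert (He : 0 < eps / M) by (apply Rdiv_lt_0_compat; [apply cond_pos | lra]).
  destruct (Heine g (fun x => a <= x <= b) (compact_P3 a b)
              (fun x Hx => proj2 (continuity_pt_filterlim g x) (g_cont x Hx))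
              (mkposreal _ He)) as [d Hd].
  assert (Hd' : 0 < d / (b - a)) by (apply Rdiv_lt_0_compat; [apply cond_pos | lra]).
  destruct (archimed_cor1 _ Hd') as [N [HN HN0]].
  exists N. intros n Hn t. change (Rabs (approx n t - f (clamp t) * g (clamp t)) < eps).
  assert (Hmesh : mesh n < d).
  { assert (HNn : INR N <= INR (S n)) by (apply le_INR; lia).
    assert (HN1 : 0 < INR N) by (apply lt_0_INR; lia).
    assert (Hinv : / INR (S n) < d / (b - a)).
    { apply Rle_lt_trans with (/ INR N); [apply Rinv_le_contravar|]; assumption. }
    unfold mesh, Rdiv. apply Rlt_le_trans with ((b - a) * (d / (b - a))).
    - apply Rmult_lt_compat_l; lra.
    - right. field. lra. }
  unfold approx. pose proof (clamp_bounds t) as Hy.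
  generalize dependent (clamp t); intros y Hy.
  destruct (grid_floor_bounds a (mesh n) y (mesh_pos n) (proj1 Hy)) as [Hz1 Hz2].
  assert (Hg : Rabs (g (grid_floor a (mesh n) y) - g y) < eps / M).
  { apply (Hd (grid_floor a (mesh n) y) y); [lra | lra |].
    rewrite Rabs_left1; lra. }
  replace (f y * g (grid_floor a (mesh n) y) - f y * g y)
    with (f y * (g (grid_floor a (mesh n) y) - g y)) by ring.
  rewrite Rabs_mult.
  apply Rle_lt_trans with (M * Rabs (g (grid_floor a (mesh n) y) - g y)).
  { apply Rmult_le_compat_r; [apply Rabs_pos | now apply Hf]. }
  apply Rlt_le_trans with (M * (eps / M)).
  - apply Rmult_lt_compat_l; lra.
  - right. field. lra.
Qed.

Lemma ex_RInt_mult_continuous_lt : ex_RInt (fun x => f x * g x) a b.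
Proof.
  destruct (filterlim_RInt approx a b eventually eventually_filter _
              (fun n => RInt (approx n) a b)
              (fun n => RInt_correct _ _ _ (approx_ex_RInt n)) approx_cvg)
    as [I [_ HI]].
  apply ex_RInt_ext with (fun x => f (clamp x) * g (clamp x)); [|now exists I].
  intros x Hx. rewrite Rmin_left, Rmax_right in Hx by lra.
  now rewrite clamp_id by lra.
Qed.

End ProductIntegrable.

Lemma ex_RInt_mult_continuous (f g : R -> R) (a b : R) :
  ex_RInt f a b -> (forall x, Rmin a b <= x <= Rmax a b -> continuous g x) ->
  ex_RInt (fun x => f x * g x) a b.
Proof.
  intros Hf Hg. destruct (Rtotal_order a b) as [Hab | [<- | Hba]].
  - rewrite Rmin_left, Rmax_right in Hg by lra.
    exact (ex_RInt_mult_continuous_lt f g a b Hab Hf Hg).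
  - apply ex_RInt_point.
  - rewrite Rmin_right, Rmax_left in Hg by lra.
    apply ex_RInt_swap, ex_RInt_mult_continuous_lt; [exact Hba | now apply ex_RInt_swap | exact Hg].
Qed.

Lemma continuous_eps (f : R -> R) (t : R) : continuous f t ->
  forall eps, 0 < eps -> exists d, 0 < d /\ forall y, Rabs (y - t) < d -> Rabs (f y - f t) < eps.
Proof.
  intros Hf eps Heps.
  destruct (proj1 (filterlim_locally f (f t)) Hf (mkposreal eps Heps)) as [d Hd].
  exists d. split; [apply cond_pos | intros y Hy; exact (Hd y Hy)].
Qed.

Lemma ex_RInt_local_bound (g : R -> R) (t : R) : (forall c d, ex_RInt g c d) ->
  exists M, 0 < M /\ forall s, t - 1 <= s <= t + 1 -> Rabs (g s) <= M.
Proof.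
  intros Hg. destruct (ex_RInt_ub g (t - 1) (t + 1) (Hg _ _)) as [M0 HM0].
  rewrite Rmin_left, Rmax_right in HM0 by lra.
  exists (Rabs M0 + 1). split; [pose proof (Rabs_pos M0); lra|].
  intros s Hs. pose proof (HM0 s Hs) as H. pose proof (Rle_abs M0).
  change (Rabs (g s) <= M0) in H. lra.
Qed.

Lemma between_shift_bounds (t h s : R) : Rabs h <= 1 ->
  Rmin t (t + h) <= s <= Rmax t (t + h) -> t - 1 <= s <= t + 1 /\ Rabs (s - t) <= Rabs h.
Proof.
  intros Hh. pose proof (Rle_abs h). pose proof (Rabs_maj2 h). unfold Rmin, Rmax.
  destruct (Rle_dec t (t + h)); intros Hs;
    (split; [lra | unfold Rabs in *; destruct (Rcase_abs (s - t)), (Rcase_abs h); lra]).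
Qed.

Lemma abs_RInt_le_const_abs (k : R -> R) (a b M : R) : ex_RInt k a b ->
  (forall s, Rmin a b <= s <= Rmax a b -> Rabs (k s) <= M) -> Rabs (RInt k a b) <= Rabs (b - a) * M.
Proof. intros Hk HM. exact (norm_RInt_le_const_abs k a b _ M HM (RInt_correct _ _ _ Hk)). Qed.

Lemma antiderivative_continuous (g G : R -> R) (t : R) :
  (forall c d, ex_RInt g c d) -> (forall s u, G u - G s = RInt g s u) -> continuous G t.
Proof.
  intros Hg HG. apply continuity_pt_filterlim. intros eps Heps.
  destruct (ex_RInt_local_bound g t Hg) as [M [HM HgM]].
  exists (Rmin 1 (eps / M)). split; [apply Rmin_pos; [lra | apply Rdiv_lt_0_compat; lra]|].
  intros y [_ Hy]. simpl in Hy |- *. unfold R_dist in Hy |- *.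
  pose proof (Rmin_l 1 (eps / M)). pose proof (Rmin_r 1 (eps / M)).
  rewrite HG. replace y with (t + (y - t)) by ring.
  eapply Rle_lt_trans.
  { apply (abs_RInt_le_const_abs g t (t + (y - t)) M); [apply Hg|].
    intros s Hs. apply HgM, (between_shift_bounds t (y - t) s); lra. }
  replace (t + (y - t) - t) with (y - t) by ring.
  apply Rlt_le_trans with (eps / M * M); [apply Rmult_lt_compat_r; lra | right; field; lra].
Qed.

(* This is what makes [t |-> f t * G t - int_0^t f g] differentiable even where the
   antiderivative [G] of [g] is not. *)
Lemma RInt_mult_increment_small (f g : R -> R) (t : R) :
  continuous f t -> (forall c d, ex_RInt g c d) ->
  (forall c d, ex_RInt (fun s => f s * g s) c d) ->
  forall eps, 0 < eps -> exists d, 0 < d /\ forall h, Rabs h < d ->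
    Rabs (f (t + h) * RInt g t (t + h) - RInt (fun s => f s * g s) t (t + h)) <= eps * Rabs h.
Proof.
  intros Hf Hg Hfg eps Heps.
  destruct (ex_RInt_local_bound g t Hg) as [M [HM HgM]].
  destruct (continuous_eps f t Hf (eps / (2 * M))) as [d [Hd Hfd]];
    [apply Rdiv_lt_0_compat; lra|].
  exists (Rmin 1 d). split; [apply Rmin_pos; lra|]. intros h Hh.
  pose proof (Rmin_l 1 d). pose proof (Rmin_r 1 d).
  set (k := fun s => f (t + h) * g s - f s * g s).
  assert (Hk : is_RInt k t (t + h) (minus (scal (f (t + h)) (RInt g t (t + h)))
                                        (RInt (fun s => f s * g s) t (t + h))))
    by exact (is_RInt_minus _ _ t (t + h) _ _
                (is_RInt_scal _ t (t + h) (f (t + h)) _ (RInt_correct g t (t + h) (Hg _ _)))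
                (RInt_correct _ t (t + h) (Hfg _ _))).
  assert (Hbound : forall s, Rmin t (t + h) <= s <= Rmax t (t + h) -> norm (k s) <= eps).
  { intros s Hs. destruct (between_shift_bounds t h s) as [Hs1 Hs2]; [lra | exact Hs |].
    change (Rabs (f (t + h) * g s - f s * g s) <= eps).
    assert (Hf1 : Rabs (f (t + h) - f t) < eps / (2 * M))
      by (apply Hfd; replace (t + h - t) with h by ring; lra).
    assert (Hf2 : Rabs (f s - f t) < eps / (2 * M)) by (apply Hfd; lra).
    replace (f (t + h) * g s - f s * g s) with ((f (t + h) - f t - (f s - f t)) * g s) by ring.
    rewrite Rabs_mult. apply Rle_trans with (eps / M * M); [|right; field; lra].
    apply Rmult_le_compat; [apply Rabs_pos | apply Rabs_pos | | now apply HgM].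
    eapply Rle_trans; [apply Rabs_triang|]. rewrite Rabs_Ropp.
    replace (eps / M) with (eps / (2 * M) + eps / (2 * M)) by (field; lra). lra. }
  pose proof (norm_RInt_le_const_abs k t (t + h) _ eps Hbound Hk) as B.
  replace (t + h - t) with h in B by ring. rewrite (Rmult_comm eps). exact B.
Qed.

Section IntegrationByParts.
Variables (f df g G : R -> R).
Hypothesis f_derive : forall t, is_derive f t (df t).
Hypothesis df_cont : forall t, continuous df t.
Hypothesis g_int : forall c d, ex_RInt g c d.
Hypothesis G_prim : forall s t, G t - G s = RInt g s t.

Let f_cont t : continuous f t.
Proof.
  apply (ex_derive_continuous (K := R_AbsRing) (V := R_NormedModule)).
  eexists. apply f_derive.
Qed.

Let fg_int c d : ex_RInt (fun t => f t * g t) c d.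
Proof.
  apply ex_RInt_ext with (fun t => g t * f t); [intros; apply Rmult_comm|].
  apply ex_RInt_mult_continuous; [apply g_int | intros; apply f_cont].
Qed.

Let Psi (t : R) : R := f t * G t - RInt (fun s => f s * g s) 0 t.

Let Psi_derive t : is_derive Psi t (df t * G t).
Proof.
  apply is_derive_Reals. intros eps Heps.
  assert (HG : 0 < Rabs (G t) + 1) by (pose proof (Rabs_pos (G t)); lra).
  destruct (proj1 (is_derive_Reals _ _ _) (f_derive t) (eps / (2 * (Rabs (G t) + 1))))
    as [d1 Hd1]; [apply Rdiv_lt_0_compat; lra|].
  destruct (RInt_mult_increment_small f g t (f_cont t) g_int fg_int (eps / 2))
    as [d2 [Hd2 Hsmall]]; [lra|].
  assert (Hd : 0 < Rmin d1 d2) by (apply Rmin_pos; [apply cond_pos | exact Hd2]).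
  exists (mkposreal _ Hd). simpl. intros h Hh0 Hh.
  pose proof (Rmin_l d1 d2). pose proof (Rmin_r d1 d2).
  set (J := f (t + h) * RInt g t (t + h) - RInt (fun s => f s * g s) t (t + h)).
  assert (HJ : Rabs J <= eps / 2 * Rabs h) by (apply Hsmall; lra).
  assert (Hincr : Psi (t + h) - Psi t = (f (t + h) - f t) * G t + J).
  { unfold Psi, J. rewrite <- (RInt_Chasles (fun s => f s * g s) 0 t (t + h)) by apply fg_int.
    replace (G (t + h)) with (G t + RInt g t (t + h)) by (rewrite <- G_prim; ring).
    change (plus ?x ?y) with (x + y). ring. }
  replace ((Psi (t + h) - Psi t) / h - df t * G t)
    with (((f (t + h) - f t) / h - df t) * G t + J / h) by (rewrite Hincr; field; exact Hh0).
  assert (Hh' : 0 < Rabs h) by (apply Rabs_pos_lt; exact Hh0).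
  assert (Hquot : Rabs (J / h) <= eps / 2).
  { unfold Rdiv. rewrite Rabs_mult, Rabs_inv.
    apply Rmult_le_reg_r with (Rabs h); [exact Hh'|].
    rewrite Rmult_assoc, Rinv_l by lra. lra. }
  assert (Hdiff : Rabs (((f (t + h) - f t) / h - df t) * G t) < eps / 2).
  { rewrite Rabs_mult.
    apply Rle_lt_trans with (eps / (2 * (Rabs (G t) + 1)) * Rabs (G t)).
    { apply Rmult_le_compat_r; [apply Rabs_pos|]. left. apply Hd1; [exact Hh0 | lra]. }
    apply Rlt_le_trans with (eps / (2 * (Rabs (G t) + 1)) * (Rabs (G t) + 1));
      [apply Rmult_lt_compat_l; [apply Rdiv_lt_0_compat|]; lra | right; field; lra]. }
  eapply Rle_lt_trans; [apply Rabs_triang | lra].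
Qed.

Lemma is_RInt_parts a b :
  is_RInt (fun t => df t * G t) a b (f b * G b - f a * G a - RInt (fun t => f t * g t) a b).
Proof.
  replace (f b * G b - f a * G a - RInt (fun t => f t * g t) a b) with (minus (Psi b) (Psi a)).
  - apply (is_RInt_derive (V := R_CompleteNormedModule) Psi); intros x _; [apply Psi_derive|].
    exact (continuous_mult df G x (df_cont x) (antiderivative_continuous g G x g_int G_prim)).
  - unfold Psi. rewrite <- (RInt_Chasles (fun s => f s * g s) 0 a b) by apply fg_int.
    change (minus ?x ?y) with (x - y). change (plus ?x ?y) with (x + y). lra.
Qed.

End IntegrationByParts.

Definition prim (f : R -> R) (x : R) : R := RInt f 0 x.

Lemma RInt_prim (f : R -> R) (a b : R) :
  (forall c d, ex_RInt f c d) -> RInt f a b = prim f b - prim f a.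
Proof.
  intros Hf. unfold prim. rewrite <- (RInt_Chasles f 0 a b) by apply Hf.
  change (plus ?x ?y) with (x + y). lra.
Qed.

Lemma prim_eq0 (f : R -> R) (x : R) :
  (forall y, y < 0 -> f y = 0) -> x <= 0 -> prim f x = 0.
Proof.
  intros Hf Hx. unfold prim.
  rewrite (RInt_ext f (fun _ => 0)), RInt_const.
  - apply Rmult_0_r.
  - intros y Hy. rewrite Rmin_right, Rmax_left in Hy by lra. apply Hf. lra.
Qed.

Lemma is_RInt_shift (f : R -> R) (s a b l : R) :
  is_RInt f (a - s) (b - s) l -> is_RInt (fun x => f (x - s)) a b l.
Proof.
  intros Hf. apply is_RInt_ext with (fun x => scal 1 (f (1 * x + - s))).
  - intros x _. change (scal 1 ?v) with (1 * v). rewrite Rmult_1_l. f_equal. ring.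
  - replace (a - s) with (1 * a + - s) in Hf by ring.
    replace (b - s) with (1 * b + - s) in Hf by ring.
    exact (is_RInt_comp_lin f 1 (- s) a b l Hf).
Qed.

Lemma is_RInt_lin2 (u v : R -> R) (k1 k2 a b : R) : ex_RInt u a b -> ex_RInt v a b ->
  is_RInt (fun x => k1 * u x + k2 * v x) a b (k1 * RInt u a b + k2 * RInt v a b).
Proof.
  intros Hu Hv.
  exact (is_RInt_plus _ _ a b _ _ (is_RInt_scal _ a b k1 _ (RInt_correct u a b Hu))
          (is_RInt_scal _ a b k2 _ (RInt_correct v a b Hv))).
Qed.

Lemma continuous_exp_lin (k : R) (x : R) : continuous (fun y => exp (k * y)) x.
Proof.
  apply (ex_derive_continuous (K := R_AbsRing) (V := R_NormedModule)).
  auto_derive. exact I.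
Qed.

Lemma exp_le_exp (x y : R) : x <= y -> exp x <= exp y.
Proof.
  intros H. destruct (Rle_lt_or_eq_dec _ _ H) as [Hlt | ->].
  - left. now apply exp_increasing.
  - right. reflexivity.
Qed.

Lemma exp_gt_1 (x : R) : 0 < x -> 1 < exp x.
Proof. intros Hx. rewrite <- exp_0. now apply exp_increasing. Qed.

Definition exp_damped (alpha : R) (r : R -> R) (x : R) : R := r x * exp (- (alpha * x)).

Section ExpKernel.
Variables (alpha : R) (r : R -> R).
Hypothesis alpha_pos : 0 < alpha.
Hypothesis r_int : forall a b, ex_RInt r a b.
Hypothesis r_neg : forall x, x < 0 -> r x = 0.
Hypothesis r_mono : forall x y, x <= y -> r x <= r y.

Let D := exp_damped alpha r.

Lemma ex_RInt_exp_damped a b : ex_RInt D a b.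
Proof.
  apply ex_RInt_mult_continuous; [apply r_int | intros x _].
  apply continuous_ext with (fun y => exp ((- alpha) * y)); [intros y; f_equal; ring|].
  apply continuous_exp_lin.
Qed.

Lemma beta_y_prim y :
  beta_y alpha r y = alpha / (exp alpha - 1) * (exp (alpha * y) * (prim D y - prim D (y - 1))).
Proof.
  unfold beta_y. f_equal. rewrite <- (RInt_prim D) by apply ex_RInt_exp_damped.
  apply is_RInt_unique, (is_RInt_ext (fun x => scal (exp (alpha * y)) (D x))).
  - intros x _.
    change (exp (alpha * y) * (r x * exp (- (alpha * x))) = r x * exp (alpha * (y - x))).
    replace (alpha * (y - x)) with (alpha * y + - (alpha * x)) by ring. rewrite exp_plus. ring.
  - exact (is_RInt_scal _ _ _ _ _ (RInt_correct D _ _ (ex_RInt_exp_damped _ _))).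
Qed.

Lemma is_RInt_exp_prim_shift s a b :
  is_RInt (fun x => exp (alpha * x) * prim D (x - s)) a b
    ((exp (alpha * b) * prim D (b - s) - exp (alpha * a) * prim D (a - s)
      - exp (alpha * s) * (prim r (b - s) - prim r (a - s))) / alpha).
Proof.
  set (f := fun x => exp (alpha * x) / alpha).
  assert (Hf : forall t, is_derive f t (exp (alpha * t))).
  { intros t. unfold f. auto_derive; [exact I | field; lra]. }
  assert (HDs : forall c d, is_RInt (fun x => D (x - s)) c d (prim D (d - s) - prim D (c - s))).
  { intros c d. apply is_RInt_shift. rewrite <- RInt_prim by apply ex_RInt_exp_damped.
    exact (RInt_correct D _ _ (ex_RInt_exp_damped _ _)). }
  assert (Hfg : RInt (fun t => f t * D (t - s)) a b
                = exp (alpha * s) / alpha * (prim r (b - s) - prim r (a - s))).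
  { apply is_RInt_unique.
    apply is_RInt_ext with (fun x => scal (exp (alpha * s) / alpha) (r (x - s))).
    - intros x _.
      change (exp (alpha * s) / alpha * r (x - s)
              = exp (alpha * x) / alpha * (r (x - s) * exp (- (alpha * (x - s))))).
      replace (alpha * x) with (alpha * s + alpha * (x - s)) by ring.
      rewrite exp_plus, exp_Ropp. pose proof (exp_pos (alpha * (x - s))).
      field. lra.
    - apply (is_RInt_scal (fun x => r (x - s))), is_RInt_shift.
      rewrite <- RInt_prim by apply r_int. exact (RInt_correct r _ _ (r_int _ _)). }
  pose proof (is_RInt_parts f (fun t => exp (alpha * t)) (fun x => D (x - s))
                (fun x => prim D (x - s)) Hf (continuous_exp_lin alpha)
                (fun c d => ex_intro _ _ (HDs c d))
                (fun c d => eq_sym (is_RInt_unique _ _ _ _ (HDs c d))) a b) as Hparts.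
  cbv beta in Hparts. rewrite Hfg in Hparts. unfold f in Hparts.
  replace (_ / alpha) with (exp (alpha * b) / alpha * prim D (b - s) -
    exp (alpha * a) / alpha * prim D (a - s) -
    exp (alpha * s) / alpha * (prim r (b - s) - prim r (a - s))) by (field; lra).
  exact Hparts.
Qed.

Lemma RInt_beta_y V :
  RInt (beta_y alpha r) 0 V = (exp (alpha * V) * (prim D V - prim D (V - 1))
                               - prim r V + exp alpha * prim r (V - 1)) / (exp alpha - 1).
Proof.
  pose proof (exp_gt_1 alpha alpha_pos) as HE.
  assert (HD0 : forall x, x <= 0 -> prim D x = 0).
  { intros x Hx. apply prim_eq0; [|exact Hx].
    intros y Hy. unfold D, exp_damped. rewrite r_neg by exact Hy. ring. }
  assert (Hr0 : forall x, x <= 0 -> prim r x = 0) by (intros x; apply prim_eq0, r_neg).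
  pose proof (is_RInt_scal _ 0 V (alpha / (exp alpha - 1)) _
                (is_RInt_minus _ _ 0 V _ _ (is_RInt_exp_prim_shift 0 0 V)
                   (is_RInt_exp_prim_shift 1 0 V))) as H.
  apply (is_RInt_ext _ (beta_y alpha r)) in H.
  - rewrite (is_RInt_unique _ _ _ _ H).
    change (scal ?k ?v) with (k * v). change (minus ?u ?v) with (u - v).
    rewrite (HD0 (0 - 0)), (HD0 (0 - 1)), (Hr0 (0 - 0)), (Hr0 (0 - 1)) by lra.
    rewrite !Rminus_0_r, !Rmult_0_r, !Rmult_1_r, exp_0.
    R_eq. field. lra.
  - intros x _. rewrite beta_y_prim, Rminus_0_r.
    change (alpha / (exp alpha - 1)
              * (exp (alpha * x) * prim D x - exp (alpha * x) * prim D (x - 1))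
            = alpha / (exp alpha - 1) * (exp (alpha * x) * (prim D x - prim D (x - 1)))).
    ring.
Qed.

Lemma RInt_damped_lin k1 k2 a b :
  RInt (fun x => k1 * D x + k2 * r x) a b = k1 * (prim D b - prim D a) + k2 * (prim r b - prim r a).
Proof.
  rewrite <- (RInt_prim D), <- (RInt_prim r) by (apply ex_RInt_exp_damped || apply r_int).
  apply is_RInt_unique, is_RInt_lin2; [apply ex_RInt_exp_damped | apply r_int].
Qed.

Lemma RInt_r_phi_x rho U a b :
  RInt (fun x => r x * phi_x alpha rho U x) a b =
    ((1 - rho) * (alpha / (exp alpha - 1)) * exp (alpha * U)
       - exp (alpha * (U - rho)) / (alpha * (exp alpha - 1))) * (prim D b - prim D a)
    + exp alpha / (alpha * (exp alpha - 1)) * (prim r b - prim r a).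
Proof.
  pose proof (exp_gt_1 alpha alpha_pos). rewrite <- RInt_damped_lin. apply RInt_ext. intros x _.
  unfold phi_x, D, exp_damped.
  replace (alpha * (U - x)) with (alpha * U + - (alpha * x)) by ring.
  replace (alpha * (U - rho - x)) with (alpha * (U - rho) + - (alpha * x)) by ring.
  rewrite !exp_plus. R_eq. field. lra.
Qed.

Lemma RInt_r_psi_x rho U a b :
  RInt (fun x => r x * psi_x alpha rho U x) a b =
    (1 - rho) * (alpha / (exp alpha - 1)) * exp (alpha * U) * (prim D b - prim D a)
    + (prim r b - prim r a).
Proof.
  pose proof (exp_gt_1 alpha alpha_pos).
  rewrite <- (Rmult_1_l (prim r b - prim r a)), <- RInt_damped_lin. apply RInt_ext. intros x _.
  unfold psi_x, D, exp_damped.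
  replace (alpha * (U - x)) with (alpha * U + - (alpha * x)) by ring.
  rewrite !exp_plus. R_eq. field. lra.
Qed.

(* On [b - rho, b] the weight [exp alpha - exp (alpha * (b - rho + 1 - x))] is nonnegative,
   so monotonicity lets us replace [r x] by [r b]. *)
Lemma exp_damped_tail_le b rho : 0 <= rho <= 1 ->
  exp alpha * (prim r b - prim r (b - rho))
    - exp (alpha * (b - rho + 1)) * (prim D b - prim D (b - rho))
  <= r b * (rho * exp alpha - (exp alpha - exp (alpha * (1 - rho))) / alpha).
Proof.
  intros Hrho. set (a := b - rho).
  set (k := fun x => exp alpha - exp (alpha * (a + 1 - x))).
  set (F := fun x => r b * (exp alpha * x + exp (alpha * (a + 1 - x)) / alpha)).
  assert (HF : is_RInt (fun x => r b * k x) a b (minus (F b) (F a))).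
  { apply (is_RInt_derive (V := R_CompleteNormedModule) F).
    - intros x _. unfold F, k. auto_derive; [exact I|].
      replace (a + 1 + - x) with (a + 1 - x) by ring. field. lra.
    - intros x _. apply (ex_derive_continuous (K := R_AbsRing) (V := R_NormedModule)).
      unfold k. auto_derive. exact I. }
  assert (HL : is_RInt (fun x => r x * k x) a b
     (exp alpha * RInt r a b + - exp (alpha * (a + 1)) * RInt D a b)).
  { apply (is_RInt_ext (fun x => exp alpha * r x + - exp (alpha * (a + 1)) * D x)).
    - intros x _. unfold k, D, exp_damped.
      replace (alpha * (a + 1 - x)) with (alpha * (a + 1) + - (alpha * x)) by ring.
      rewrite exp_plus. R_eq. ring.
    - apply is_RInt_lin2; [apply r_int | apply ex_RInt_exp_damped]. }
  rewrite !RInt_prim in HL by (apply r_int || apply ex_RInt_exp_damped).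
  replace (r b * _) with (minus (F b) (F a)).
  - replace (_ - _) with (exp alpha * (prim r b - prim r a)
                          + - exp (alpha * (a + 1)) * (prim D b - prim D a)) by ring.
    apply (is_RInt_le _ _ a b _ _ ltac:(unfold a; lra) HL HF).
    intros x Hx. apply Rmult_le_compat_r; [|apply r_mono; lra].
    assert (alpha * (a + 1 - x) <= alpha * 1) by (apply Rmult_le_compat_l; lra).
    pose proof (exp_le_exp (alpha * (a + 1 - x)) alpha ltac:(lra)). unfold k. lra.
  - unfold F. replace (a + 1 - b) with (1 - rho) by (unfold a; ring).
    replace (a + 1 - a) with 1 by ring. rewrite Rmult_1_r.
    change (minus ?u ?v) with (u - v). unfold a. R_eq. field. lra.
Qed.

End ExpKernel.

Theorem lemmaB3 (alpha rho U : R) (r : R -> R)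
  (halpha : 1 <= alpha) (hrho0 : 0 <= rho) (hrho1 : rho <= 1) (hU : 1 <= U)
  (hr_nonneg : forall x, 0 <= r x)
  (hr_mono : forall x y, x <= y -> r x <= r y)
  (hr_loc : forall a b, ex_RInt r a b)
  (hr_neg : forall x, x < 0 -> r x = 0) :
  PRD_a alpha rho U r <=
    RInt (fun x => r x * phi_x alpha rho U x) (U - 1) (U - rho)
    + RInt (fun x => r x * psi_x alpha rho U x) (U - rho) U
    + r (U - 1) * Omega alpha rho.
Proof.
  assert (Ha : 0 < alpha) by lra.
  pose proof (exp_gt_1 alpha Ha) as HE.
  pose proof (exp_damped_tail_le alpha r Ha hr_loc hr_mono (U - 1) rho (conj hrho0 hrho1)) as Htail.
  replace (U - 1 - rho + 1) with (U - rho) in Htail by ring.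
  replace (U - 1 - rho) with (U - rho - 1) in Htail by ring.
  unfold PRD_a, Omega.
  rewrite (RInt_beta_y alpha r), (beta_y_prim alpha r), !(RInt_prim r), (RInt_r_phi_x alpha r),
    (RInt_r_psi_x alpha r) by first [assumption | lra].
  rewrite (prim_eq0 r 0 hr_neg (Rle_refl 0)).
  match type of Htail with ?T <= ?B => set (tail := T) in Htail; set (bound := B) in Htail end.
  match goal with |- ?L <= ?Rt =>
    assert (Hgap : Rt - L = (bound - tail) / (alpha * (exp alpha - 1))) end.
  { unfold tail, bound. R_eq. field. lra. }
  assert (0 <= (bound - tail) / (alpha * (exp alpha - 1))) by (apply Rdiv_le_0_compat; nra).
  lra.
Qed.
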